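(* Let $m,n\ge1$. If there exists a KA$(m,n)$ and there exists a pair of orthogonal diagonal Latin squares of order $n$, then there exists an $m$-SCMS$(n)$.
   Context: $I_k=\{0,\dots,k-1\}$. A Kotzig array KA$(m,n)$ is an $m\times n$ array in which each row is a permutation of $\{0,1,\dots,n-1\}$ and all column sums are equal. A Latin square of order $n$ over an $n$-set $S$ is an $n\times n$ array each of whose rows and columns is a permutation of $S$; it is diagonal if its main diagonal $(a_{i,i})$ and back diagonal $(a_{i,n-1-i})$ are also permutations of $S$. Two Latin squares of order $n$ are orthogonal if, when superimposed, each ordered pair of symbols occurs exactly once. An MS$(n)$ is an $n\times n$ matrix with entries exactly $0,\dots,n^2-1$ whose row sums, column sums and two diagonal sums are all equal. $S_2(n)=\frac1n\sum_{k=0}^{n^2-1}k^2$. An $m$-SCMS$(n)$ is a list $B_0,\dots,B_{m-1}$ of (not necessarily distinct) MS$(n)$s, $B_s=(b^{(s)}_{i,j})$, such that $\sum_{s\in I_m}\sum_{j\in I_n}(b^{(s)}_{i,j})^{2}=mS_{2}(n)$ for every $i$, $\sum_{s\in I_m}\sum_{i\in I_n}(b^{(s)}_{i,j})^{2}=mS_{2}(n)$ for every $j$, $\sum_{s}\sum_{i}(b^{(s)}_{i,i})^{2}=mS_{2}(n)$, and $\sum_{s}\sum_{i}(b^{(s)}_{i,n-1-i})^{2}=mS_{2}(n)$. *)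

From mathcomp Require Import all_boot.
Set Implicit Arguments. Unset Strict Implicit. Unset Printing Implicit Defensive.

Definition kotzig_array (m n : nat) (K : 'I_m -> 'I_n -> 'I_n) : Prop :=
  (forall i, injective (K i)) /\
  (forall j j' : 'I_n, \sum_(i < m) (K i j : nat) = \sum_(i < m) (K i j' : nat)).

Definition latin_square (n : nat) (L : 'I_n -> 'I_n -> 'I_n) : Prop :=
  (forall i, injective (L i)) /\ (forall j, injective (fun i => L i j)).

Definition diagonal_latin_square (n : nat) (L : 'I_n -> 'I_n -> 'I_n) : Prop :=
  latin_square L /\
  injective (fun i => L i i) /\
  injective (fun i => L i (rev_ord i)).

Definition orthogonal (n : nat) (L1 L2 : 'I_n -> 'I_n -> 'I_n) : Prop :=
  injective (fun p : 'I_n * 'I_n => (L1 p.1 p.2, L2 p.1 p.2)).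

Definition magic_square (n : nat) (B : 'I_n -> 'I_n -> nat) : Prop :=
  (forall i j, B i j < n ^ 2) /\
  injective (fun p : 'I_n * 'I_n => B p.1 p.2) /\
  exists c : nat,
    (forall i, \sum_(j < n) B i j = c) /\
    (forall j, \sum_(i < n) B i j = c) /\
    \sum_(i < n) B i i = c /\
    \sum_(i < n) B i (rev_ord i) = c.

(* n * S_2(n) = sum_{k < n^2} k^2, so "X = m S_2(n)" is encoded as
   n * X = m * sum_{k<n^2} k^2 (exactly equivalent, avoids rationals). *)
Definition sum_sq (n : nat) : nat := \sum_(k < n ^ 2) k ^ 2.

Definition scms (m n : nat) (B : 'I_m -> 'I_n -> 'I_n -> nat) : Prop :=
  (forall s, magic_square (B s)) /\
  (forall i, n * (\sum_(s < m) \sum_(j < n) (B s i j) ^ 2) = m * sum_sq n) /\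
  (forall j, n * (\sum_(s < m) \sum_(i < n) (B s i j) ^ 2) = m * sum_sq n) /\
  n * (\sum_(s < m) \sum_(i < n) (B s i i) ^ 2) = m * sum_sq n /\
  n * (\sum_(s < m) \sum_(i < n) (B s i (rev_ord i)) ^ 2) = m * sum_sq n.

From mathcomp Require Import all_boot.
From mathcomp Require Import zify.

(* Take B_s(i,j) = n K(s, L1(i,j)) + L2(i,j), a two-digit base-n number.
   Orthogonality of L1, L2 makes the entries of each B_s exactly 0..n^2-1, and
   every line (row, column or diagonal) of a diagonal Latin square meets each
   symbol once, so each B_s is magic.  Over a line of all m squares, the sum of
   the squared entries is n^2 m Q + 2n (sum_t L2_t sum_s K(s,t)) + m Q, where
   S = sum_(k<n) k and Q = sum_(k<n) k^2.  The cross term is the only one that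
   could depend on the line; it does not, because every column sum of the
   Kotzig array equals m S / n, and the total becomes m (n^3 Q + 2 n S^2 + n Q) / n
   = m S_2(n). *)

Lemma sum_comp_inj {n} {f : 'I_n -> 'I_n} (g : nat -> nat) :
  injective f -> \sum_(t < n) g (f t) = \sum_(t < n) g t.
Proof. by move=> f_inj; rewrite [RHS](reindex_inj f_inj). Qed.

Lemma big_nat_mul_digits n a (f : nat -> nat) :
  \sum_(0 <= k < n * a) f k = \sum_(0 <= x < a) \sum_(0 <= y < n) f (n * x + y).
Proof.
elim: a => [|a IH]; first by rewrite muln0 !big_geq.
rewrite big_nat_recr //= -IH mulnS addnC (big_cat_nat _ (n := n * a)) ?leq_addr //=.
congr (_ + _); rewrite -{1}[n * a]add0n big_addn addKn.
by apply: eq_bigr => y _; rewrite addnC.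
Qed.

Lemma sum_sq_digits a n (x : 'I_a -> 'I_n -> nat) (y : 'I_n -> nat) :
  \sum_(s < a) \sum_(t < n) (n * x s t + y t) ^ 2 =
    n ^ 2 * (\sum_(s < a) \sum_(t < n) x s t ^ 2)
    + 2 * n * (\sum_(t < n) y t * \sum_(s < a) x s t)
    + a * \sum_(t < n) y t ^ 2.
Proof.
have sqE t s : (n * x s t + y t) ^ 2 = n ^ 2 * x s t ^ 2 + 2 * n * (y t * x s t) + y t ^ 2.
  by rewrite sqrnD expnMn; lia.
under eq_bigr do under eq_bigr do rewrite sqE.
under eq_bigr do rewrite !big_split /=.
rewrite !big_split /=; congr (_ + _ + _).
- by rewrite big_distrr; apply: eq_bigr => s _; rewrite big_distrr.
- rewrite exchange_big /= big_distrr /=; apply: eq_bigr => t _.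
  by rewrite -!big_distrr.
- by rewrite sum_nat_const card_ord.
Qed.

Lemma sum_sqE n :
  sum_sq n = n ^ 3 * (\sum_(k < n) k ^ 2) + 2 * n * (\sum_(k < n) k) ^ 2
             + n * (\sum_(k < n) k ^ 2).
Proof.
have -> : sum_sq n = \sum_(s < n) \sum_(t < n) (n * s + t) ^ 2.
  rewrite /sum_sq -mulnn -(big_mkord xpredT (fun k => k ^ 2)) big_nat_mul_digits.
  by rewrite big_mkord; under eq_bigr do rewrite big_mkord.
rewrite (@sum_sq_digits n n (fun s _ => s) (fun t => t)) /=.
have -> : \sum_(s < n) \sum_(t < n) (s : nat) ^ 2 = n * \sum_(k < n) k ^ 2.
  by rewrite big_distrr; apply: eq_bigr => s _; rewrite sum_nat_const card_ord.
rewrite -big_distrl /=; lia.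
Qed.

Lemma sum_digits_perm n (u v : 'I_n -> 'I_n) :
  injective u -> injective v ->
  \sum_(t < n) (n * u t + v t) = n * (\sum_(k < n) k) + \sum_(k < n) k.
Proof.
move=> u_inj v_inj; rewrite big_split /= -big_distrr /=.
by rewrite (sum_comp_inj (fun k => k) u_inj) (sum_comp_inj (fun k => k) v_inj).
Qed.

Lemma digits_inj n (a b a' b' : 'I_n) :
  n * a + b = n * a' + b' -> a = a' /\ b = b'.
Proof.
have n_gt0 : 0 < n := leq_ltn_trans (leq0n a) (ltn_ord a).
move=> E; have bE : (b : nat) = b'.
  by have := congr1 (modn^~ n) E; rewrite !(mulnC n) !modnMDl !modn_small.
split; apply: val_inj => //=.
by apply/eqP; rewrite -(eqn_pmul2l n_gt0) -(eqn_add2r b) {2}bE E.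
Qed.

Lemma magic_square_orthogonal n (k : 'I_n -> 'I_n) (L1 L2 : 'I_n -> 'I_n -> 'I_n) :
  injective k -> diagonal_latin_square L1 -> diagonal_latin_square L2 ->
  orthogonal L1 L2 -> magic_square (fun i j => n * k (L1 i j) + L2 i j).
Proof.
move=> k_inj [[r1 c1] [d1 a1]] [[r2 c2] [d2 a2]] L12_orth.
have line_inj (u : 'I_n -> 'I_n) : injective u -> injective (fun t => k (u t)).
  by move=> u_inj a b /k_inj /u_inj.
split; [|split].
- move=> i j; have := ltn_ord (k (L1 i j)); have := ltn_ord (L2 i j); nia.
- move=> [i j] [i' j'] /digits_inj /= [/k_inj E1 E2].
  by apply: L12_orth => /=; rewrite E1 E2.
- exists (n * (\sum_(t < n) t) + \sum_(t < n) t).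
  split; [|split; [|split]].
  + by move=> i; apply: sum_digits_perm (line_inj _ (r1 i)) (r2 i).
  + by move=> j; apply: sum_digits_perm (line_inj _ (c1 j)) (c2 j).
  + exact: sum_digits_perm (line_inj _ d1) d2.
  + exact: sum_digits_perm (line_inj _ a1) a2.
Qed.

Section KotzigArray.
Variables (m n : nat) (K : 'I_m -> 'I_n -> 'I_n).
Hypothesis KA : kotzig_array K.

Lemma kotzig_array_comp (u : 'I_n -> 'I_n) :
  injective u -> kotzig_array (fun s t => K s (u t)).
Proof.
move=> u_inj; split=> [s a b /KA.1 /u_inj //|t t'].
exact: KA.2.
Qed.

Lemma kotzig_row_sum s (g : nat -> nat) :
  \sum_(t < n) g (K s t) = \sum_(k < n) g k.
Proof. exact: sum_comp_inj (KA.1 s). Qed.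

Lemma kotzig_column_sum j :
  n * (\sum_(s < m) (K s j : nat)) = m * \sum_(k < n) k.
Proof.
have <- : \sum_(t < n) \sum_(s < m) (K s t : nat) = n * \sum_(s < m) (K s j : nat).
  by under eq_bigr => t _ do rewrite (KA.2 t j); rewrite sum_nat_const card_ord.
rewrite exchange_big /=.
by under eq_bigr do rewrite (kotzig_row_sum _ id); rewrite sum_nat_const card_ord.
Qed.

Lemma kotzig_sq_sum (x0 : 'I_n) (v : 'I_n -> 'I_n) :
  injective v ->
  n * (\sum_(s < m) \sum_(t < n) (n * K s t + v t) ^ 2) = m * sum_sq n.
Proof.
move=> v_inj; rewrite sum_sq_digits sum_sqE.
have -> : \sum_(t < n) v t * \sum_(s < m) K s t = (\sum_(s < m) K s x0) * \sum_(k < n) k.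
  under eq_bigr => t _ do rewrite (KA.2 t x0).
  by rewrite -big_distrl /= (sum_comp_inj (fun k => k) v_inj) mulnC.
have -> : \sum_(s < m) \sum_(t < n) (K s t : nat) ^ 2 = m * \sum_(k < n) k ^ 2.
  by under eq_bigr do rewrite (kotzig_row_sum _ (fun k => k ^ 2)); rewrite sum_nat_const card_ord.
rewrite (sum_comp_inj (fun k => k ^ 2) v_inj).
have := kotzig_column_sum x0.
move: (\sum_(s < m) _) (\sum_(k < n) k) (\sum_(k < n) k ^ 2) => c S Q ncE.
have -> : n * (n ^ 2 * (m * Q) + 2 * n * (c * S) + m * Q)
          = m * (n ^ 3 * Q) + 2 * n * S * (n * c) + m * (n * Q) by lia.
rewrite ncE; lia.
Qed.

End KotzigArray.

Theorem lemma3 (m n : nat) (hm : 1 <= m) (hn : 1 <= n) :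
  (exists K : 'I_m -> 'I_n -> 'I_n, kotzig_array K) ->
  (exists L1 L2 : 'I_n -> 'I_n -> 'I_n,
      diagonal_latin_square L1 /\ diagonal_latin_square L2 /\ orthogonal L1 L2) ->
  exists B : 'I_m -> 'I_n -> 'I_n -> nat, scms B.
Proof.
move=> [K KA] [L1 [L2 [L1_dls [L2_dls L12_orth]]]].
have x0 : 'I_n := Ordinal hn.
have [[r1 c1] [d1 a1]] := L1_dls; have [[r2 c2] [d2 a2]] := L2_dls.
have line_sq (u v : 'I_n -> 'I_n) : injective u -> injective v ->
    n * (\sum_(s < m) \sum_(t < n) (n * K s (u t) + v t) ^ 2) = m * sum_sq n.
  by move=> u_inj; apply: kotzig_sq_sum x0 _; apply: kotzig_array_comp.
exists (fun s i j => n * K s (L1 i j) + L2 i j).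
split; first by move=> s; apply: magic_square_orthogonal => //; apply: KA.1.
split; [|split; [|split]].
- by move=> i; apply: line_sq (r1 i) (r2 i).
- by move=> j; apply: line_sq (c1 j) (c2 j).
- exact: line_sq d1 d2.
- exact: line_sq a1 a2.
Qed.
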